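(* Consider the asynchronous $(n,k)$ game on the complete graph with agent set $[n]$ ($n\ge2$) consisting of $n_r$ rejectors and $n-n_r$ random followers, and let $Z_t=\sum_{i\in[n]}x_i(t)$. Then $$\mathbb{E}[Z_{t+1}-Z_t]=-\frac{n_r\,\mathbb{E}[Z_t]}{n(n-1)},$$ and $(Z_t)_{t\ge0}$ is a supermartingale.
   Context: Each agent $i\in[n]$ holds an opinion $x_i(t)\in\{0,1\}$ at time $t=0,1,2,\dots$. The social graph is complete: every agent's social neighbors are all the other $n-1$ agents. The game is asynchronous: at each time step a single agent, chosen uniformly at random from $[n]$ (independently of the past), updates its opinion, and all other opinions stay the same. A rejector holds opinion $0$ at all times. A random follower has initial opinion distributed as Bernoulli$(1/2)$ (independently across agents), and when it updates it adopts the current opinion of one of its social neighbors chosen uniformly at random. *)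

From HB Require Import structures.
From mathcomp Require Import all_boot all_order all_algebra.
Set Implicit Arguments. Unset Strict Implicit. Unset Printing Implicit Defensive.
Import Order.TTheory GRing.Theory Num.Theory.
Local Open Scope ring_scope.

Section Game.
Variables (R : realFieldType) (n : nat) (rej : {set 'I_n}).

(* opinion profile x : agent -> opinion (true = 1, false = 0) *)
Definition config := {ffun 'I_n -> bool}.

Definition upd (x : config) (i : 'I_n) (b : bool) : config :=
  [ffun k => if k == i then b else x k].

Definition Zsum (x : config) : R := \sum_(i < n) ((x i : nat)%:R).

(* initial law: rejectors hold 0, followers i.i.d. Bernoulli(1/2) *)
Definition mu0 (x : config) : R :=
  \prod_(i < n) (if i \in rej then (if x i then 0 else 1) else 2^-1).

(* one asynchronous step: a uniformly random agent i updates; a rejector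
   keeps opinion 0; a random follower copies the opinion of a uniformly
   random social neighbour j <> i (complete graph: n-1 neighbours). *)
Definition trans (x y : config) : R :=
  \sum_(i < n)
    (n%:R^-1 *
     (if i \in rej then ((y == upd x i false) : nat)%:R
      else \sum_(j < n | j != i) ((n.-1)%:R^-1 * ((y == upd x i (x j)) : nat)%:R))).

Fixpoint ptrans (x : config) (s : seq config) : R :=
  match s with
  | [::] => 1
  | y :: s' => trans x y * ptrans y s'
  end.

(* probability that the history (x(0), x(1), ..., x(t)) equals x0 :: s *)
Definition phist (x0 : config) (s : seq config) : R := mu0 x0 * ptrans x0 s.

(* E[Z_t], computed on the space of histories of length t+1 *)
Definition EZ (t : nat) : R :=
  \sum_(x0 : config) \sum_(s : t.-tuple config) phist x0 s * Zsum (last x0 s).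

(* supermartingale w.r.t. the natural filtration of the history:
   for every history h of length t+1,
   E[Z_{t+1} ; history_t = h] <= Z_t(h) * P(history_t = h),
   i.e. E[Z_{t+1} | F_t] <= Z_t (integrability is automatic: finite space). *)
Definition Z_supermartingale : Prop :=
  forall (t : nat) (x0 : config) (s : t.-tuple config),
    \sum_(y : config) phist x0 (rcons s y) * Zsum y
      <= phist x0 s * Zsum (last x0 s).

End Game.

From HB Require Import structures.
From mathcomp Require Import all_boot all_order all_algebra.
From mathcomp Require Import ring.
Set Implicit Arguments. Unset Strict Implicit. Unset Printing Implicit Defensive.
Import Order.TTheory GRing.Theory Num.Theory.
Local Open Scope ring_scope.

(* When a rejector i updates, Z loses x_i; when a follower i updates, its new
   opinion has mean (Z - x_i)/(n-1).  Averaging over the updating agent, the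
   one-step drift of Z from a configuration x is -(n_r Z - Z_rej)/(n(n-1)),
   where Z_rej is the total opinion of the rejectors.  Since every x_i <= Z,
   the drift is nonpositive: Z is a supermartingale.  Moreover Z_rej is 0 at
   time 0 and its conditional mean is multiplied by 1 - 1/n at each step, so
   E[Z_rej(t)] = 0 for all t, which leaves the drift -n_r E[Z_t]/(n(n-1)). *)

Lemma sum_tuple0 (V : nmodType) (T : finType) (F : 0.-tuple T -> V) :
  \sum_(s : 0.-tuple T) F s = F [tuple].
Proof. by apply: big_pred1 => s; rewrite [s]tuple0 /= eqxx. Qed.

Lemma sum_tupleS (V : nmodType) (T : finType) (t : nat) (F : t.+1.-tuple T -> V) :
  \sum_(s : t.+1.-tuple T) F s = \sum_(y : T) \sum_(s : t.-tuple T) F [tuple of y :: s].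
Proof.
rewrite pair_big (reindex (fun p : T * t.-tuple T => [tuple of p.1 :: p.2])) //=.
exists (fun s : t.+1.-tuple T => (thead s, [tuple of behead s])).
  by move=> [y s] _; congr pair; apply: val_inj.
by move=> s _; rewrite [s in RHS]tuple_eta.
Qed.

Lemma sum_neq (V : zmodType) (T : finType) (i : T) (F : T -> V) :
  \sum_(j | j != i) F j = \sum_j F j - F i.
Proof. by rewrite [\sum_j F j](bigD1 i) //= addrC addrK. Qed.

Lemma sum_notin (V : zmodType) (T : finType) (A : {set T}) (F : T -> V) :
  \sum_(i | i \notin A) F i = \sum_i F i - \sum_(i in A) F i.
Proof. by rewrite [\sum_i F i](bigID (mem A)) /= addrC addrK. Qed.

Section Game.
Variables (R : realFieldType) (n : nat) (rej : {set 'I_n}).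

Local Notation config := (config n).
Local Notation trans := (trans R rej).
Local Notation ptrans := (ptrans R rej).
Local Notation phist := (phist R rej).
Local Notation mu0 := (mu0 R rej).
Local Notation Zsum := (@Zsum R n).
Local Notation opinion x i := ((x i : nat)%:R : R).

Definition transf (f : config -> R) (x : config) : R := \sum_y trans x y * f y.

(* transn t f x = E[f(X_t) | X_0 = x], summed over histories as in EZ. *)
Definition transn (t : nat) (f : config -> R) (x : config) : R :=
  \sum_(s : t.-tuple config) ptrans x s * f (last x s).

Definition mean_at (t : nat) (f : config -> R) : R := \sum_x0 mu0 x0 * transn t f x0.

Lemma transn0 f x : transn 0 f x = f x.
Proof. by rewrite /transn sum_tuple0 /= mul1r. Qed.

Lemma transnS t f x : transn t.+1 f x = transf (transn t f) x.
Proof.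
rewrite /transn sum_tupleS; apply: eq_bigr => y _.
by rewrite big_distrr; apply: eq_bigr => s _; rewrite /= mulrA.
Qed.

Lemma transnSr t f x : transn t.+1 f x = transn t (transf f) x.
Proof.
elim: t x => [|t IHt] x; first by rewrite transnS transn0; apply: eq_bigr => y _; rewrite transn0.
by rewrite transnS [RHS]transnS; apply: eq_bigr => y _; rewrite IHt.
Qed.

Lemma eq_transn t f g : f =1 g -> transn t f =1 transn t g.
Proof. by move=> fg x; apply: eq_bigr => s _; rewrite fg. Qed.

Lemma transn_lin t a b f g x :
  transn t (fun y => a * f y + b * g y) x = a * transn t f x + b * transn t g x.
Proof. by rewrite /transn !big_distrr -big_split; apply: eq_bigr => s _ /=; ring. Qed.

Lemma mean_atSr t f : mean_at t.+1 f = mean_at t (transf f).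
Proof. by apply: eq_bigr => x0 _; rewrite transnSr. Qed.

Lemma eq_mean_at t f g : f =1 g -> mean_at t f = mean_at t g.
Proof. by move=> fg; apply: eq_bigr => x0 _; rewrite (eq_transn t fg). Qed.

Lemma mean_at_lin t a b f g :
  mean_at t (fun y => a * f y + b * g y) = a * mean_at t f + b * mean_at t g.
Proof.
rewrite /mean_at !big_distrr -big_split; apply: eq_bigr => x0 _ /=.
by rewrite transn_lin; ring.
Qed.

Lemma EZ_mean_at t : EZ R rej t = mean_at t Zsum.
Proof.
apply: eq_bigr => x0 _; rewrite /transn big_distrr; apply: eq_bigr => s _.
by rewrite /phist -mulrA.
Qed.

Lemma ptrans_rcons s x y : ptrans x (rcons s y) = ptrans x s * trans (last x s) y.
Proof.
elim: s x => [|z s IHs] x /=; first by rewrite mul1r mulr1.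
by rewrite IHs mulrA.
Qed.

Lemma sum_phist_rcons x0 s f :
  \sum_y phist x0 (rcons s y) * f y = phist x0 s * transf f (last x0 s).
Proof.
rewrite /phist /transf mulr_sumr; apply: eq_bigr => y _.
by rewrite ptrans_rcons !mulrA.
Qed.

Lemma trans_ge0 x y : 0 <= trans x y.
Proof.
apply: sumr_ge0 => i _; rewrite mulr_ge0 ?invr_ge0 ?ler0n //.
by case: ifP => _; rewrite ?ler0n ?sumr_ge0 // => j _; rewrite mulr_ge0 ?invr_ge0 ?ler0n.
Qed.

Lemma ptrans_ge0 s x : 0 <= ptrans x s.
Proof. by elim: s x => [|y s IHs] x /=; rewrite ?ler01 ?mulr_ge0 ?trans_ge0. Qed.

Lemma mu0_ge0 x : 0 <= mu0 x.
Proof.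
apply: prodr_ge0 => i _; case: ifP => _; last by rewrite invr_ge0 ler0n.
by case: (x i); rewrite ?ler01 ?lexx.
Qed.

Lemma phist_ge0 x0 s : 0 <= phist x0 s.
Proof. by rewrite mulr_ge0 ?mu0_ge0 ?ptrans_ge0. Qed.

Lemma sum_indicator_mul (z : config) (g : config -> R) :
  \sum_y ((y == z) : nat)%:R * g y = g z.
Proof.
rewrite (bigD1 z) //= eqxx mul1r big1 ?addr0 // => y /negbTE ->.
by rewrite mul0r.
Qed.

Lemma transfE f x : transf f x = n%:R^-1 * \sum_i
  (if i \in rej then f (upd x i false)
   else (n.-1)%:R^-1 * \sum_(j | j != i) f (upd x i (x j))).
Proof.
rewrite /transf /trans mulr_sumr; under eq_bigr => y _ do rewrite mulr_suml.
rewrite exchange_big; apply: eq_bigr => i _ /=.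
under eq_bigr => y _ do rewrite -mulrA.
rewrite -mulr_sumr; congr (_ * _); case: ifP => _ /=; first exact: sum_indicator_mul.
under eq_bigr => y _ do rewrite mulr_suml.
rewrite exchange_big mulr_sumr; apply: eq_bigr => j _ /=.
under eq_bigr => y _ do rewrite -mulrA.
by rewrite -mulr_sumr sum_indicator_mul.
Qed.

Definition sum_on (P : pred 'I_n) (x : config) : R := \sum_(i | P i) opinion x i.

Definition Zrej : config -> R := sum_on (fun i => i \in rej).

Lemma ZrejE x : Zrej x = \sum_(i in rej) opinion x i.
Proof. by []. Qed.

Definition adopted_mean (x : config) (i : 'I_n) : R :=
  if i \in rej then 0 else (n.-1)%:R^-1 * \sum_(j | j != i) opinion x j.

Lemma sum_on_upd P x i b :
  sum_on P (upd x i b) = sum_on P x + (if P i then (b : nat)%:R - opinion x i else 0).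
Proof.
rewrite /sum_on; case Pi: (P i).
  rewrite (bigD1 i) //= [in RHS](bigD1 i) //= ffunE eqxx.
  rewrite (eq_bigr (fun k => opinion x k)); first by ring.
  by move=> k /andP[_ /negbTE]; rewrite ffunE => ->.
rewrite addr0; apply: eq_bigr => k Pk; rewrite ffunE.
by case: eqP => // ki; rewrite ki Pi in Pk.
Qed.

Hypothesis n_ge2 : (2 <= n)%N.

Lemma natr_pred : (n.-1)%:R = n%:R - 1 :> R.
Proof. by rewrite -subn1 natrB // ltnW. Qed.

Lemma natr_n_neq0 : n%:R != 0 :> R.
Proof. by rewrite pnatr_eq0 -lt0n ltnW. Qed.

Lemma natr_pred_neq0 : n%:R - 1 != 0 :> R.
Proof. by rewrite -natr_pred pnatr_eq0 -lt0n -ltnS prednK // ltnW. Qed.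

Lemma sum_neq_const (i : 'I_n) (c : R) : \sum_(j | j != i) c = c * (n%:R - 1).
Proof. by rewrite sumr_const cardC1 card_ord -[c *+ _]mulr_natr natr_pred. Qed.

Lemma sum_on_update_mean P x i :
  (if i \in rej then sum_on P (upd x i false)
   else (n.-1)%:R^-1 * \sum_(j | j != i) sum_on P (upd x i (x j)))
  = sum_on P x + (if P i then adopted_mean x i - opinion x i else 0).
Proof.
rewrite /adopted_mean; case: ifP => _; first by rewrite sum_on_upd.
under eq_bigr => j _ do rewrite sum_on_upd.
case: (P i) => /=.
  rewrite big_split sumrB !sum_neq_const natr_pred /=.
  by field; exact: natr_pred_neq0.
under eq_bigr => j _ do rewrite addr0.
by rewrite sum_neq_const natr_pred addr0; field; exact: natr_pred_neq0.
Qed.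

Lemma transf_sum_on P x : transf (sum_on P) x =
  sum_on P x + n%:R^-1 * \sum_(i | P i) (adopted_mean x i - opinion x i).
Proof.
rewrite transfE; under eq_bigr => i _ do rewrite sum_on_update_mean.
rewrite big_split /= sumr_const card_ord -big_mkcond /= mulrDr.
by rewrite -[sum_on P x *+ _]mulr_natl mulKf ?natr_n_neq0.
Qed.

Lemma transf_Zrej x : transf Zrej x = (1 - n%:R^-1) * Zrej x.
Proof.
rewrite transf_sum_on (eq_bigr (fun i => - opinion x i)) => [|i ir]; last first.
  by rewrite /adopted_mean ifT // sub0r.
by rewrite sumrN -/(Zrej x) mulrBl mul1r mulrN.
Qed.

Lemma sum_adopted_mean x :
  \sum_i adopted_mean x i = ((n%:R - 1 - #|rej|%:R) * Zsum x + Zrej x) / (n%:R - 1).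
Proof.
rewrite (bigID (mem rej)) /= big1 ?add0r => [|i ir]; last by rewrite /adopted_mean ir.
under eq_bigr => i /negbTE ir do rewrite /adopted_mean ir sum_neq -/(Zsum x) natr_pred.
rewrite -mulr_sumr sumrB !sum_notin !sumr_const card_ord -/(Zsum x) -ZrejE.
rewrite -[Zsum x *+ n]mulr_natr -[Zsum x *+ #|rej|]mulr_natr.
by field; exact: natr_pred_neq0.
Qed.

Lemma transf_Zsum x :
  transf Zsum x = Zsum x - (#|rej|%:R * Zsum x - Zrej x) / (n%:R * (n%:R - 1)).
Proof.
rewrite (transf_sum_on xpredT) sumrB sum_adopted_mean -/(Zsum x).
rewrite -[sum_on _ x]/(Zsum x).
by field; rewrite natr_n_neq0 natr_pred_neq0.
Qed.

Lemma opinion_le_Zsum (x : config) (i : 'I_n) : opinion x i <= Zsum x.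
Proof. by rewrite /Zsum (bigD1 i) //= lerDl sumr_ge0. Qed.

Lemma Zrej_le x : Zrej x <= #|rej|%:R * Zsum x.
Proof.
by rewrite ZrejE mulr_natl -sumr_const; apply: ler_sum => i _; apply: opinion_le_Zsum.
Qed.

Lemma transf_Zsum_le x : transf Zsum x <= Zsum x.
Proof.
rewrite transf_Zsum gerBl divr_ge0 ?subr_ge0 ?Zrej_le //.
by rewrite mulr_ge0 // -natr_pred ler0n.
Qed.

Lemma transn_Zrej t x : transn t Zrej x = (1 - n%:R^-1) ^+ t * Zrej x.
Proof.
elim: t x => [|t IHt] x; first by rewrite transn0 expr0 mul1r.
rewrite transnS /transf; under eq_bigr => y _ do rewrite IHt mulrCA.
by rewrite -mulr_sumr -/(transf Zrej x) transf_Zrej exprS mulrCA mulrA.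
Qed.

Lemma mu0_Zrej x : mu0 x * Zrej x = 0.
Proof.
have [/exists_inP[i ir xi] | ] := boolP [exists i in rej, x i].
  by rewrite /mu0 (bigD1 i) //= ir xi !mul0r.
rewrite negb_exists_in => /forall_inP x_rej0.
by rewrite ZrejE big1 ?mulr0 // => i /x_rej0 /negbTE ->.
Qed.

Lemma mean_at_Zrej t : mean_at t Zrej = 0.
Proof. by apply: big1 => x0 _; rewrite transn_Zrej mulrCA mu0_Zrej mulr0. Qed.

End Game.

Theorem lemma4 (R : realFieldType) (n nr : nat) (rej : {set 'I_n}) :
  (2 <= n)%N -> #|rej| = nr ->
  (forall t : nat,
     EZ R rej t.+1 - EZ R rej t = - (nr%:R * EZ R rej t) / (n%:R * (n%:R - 1)))
  /\ Z_supermartingale R rej.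
Proof.
move=> n_ge2 <-; split=> [t | t x0 s]; last first.
  by rewrite sum_phist_rcons ler_wpM2l ?phist_ge0 ?transf_Zsum_le.
pose c : R := (n%:R * (n%:R - 1))^-1.
have transf_Zsum_lin : transf rej (@Zsum R n) =1
    (fun y => (1 - #|rej|%:R * c) * Zsum R y + c * Zrej R rej y).
  by move=> y; rewrite transf_Zsum // /c; field; rewrite natr_n_neq0 ?natr_pred_neq0.
rewrite !EZ_mean_at mean_atSr (eq_mean_at rej t transf_Zsum_lin) mean_at_lin.
rewrite mean_at_Zrej // mulr0 addr0 /c.
by field; rewrite natr_n_neq0 ?natr_pred_neq0.
Qed.
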